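(* Let $\Sigma$ be a finite alphabet, $L \subseteq \Sigma^*$ regular, and $\mathcal{A}$ a finite automaton for $L$ with $m$ states. Assume that $\mathcal{B} = \mathcal{A}^{\mathsf{R}\mathsf{D}}$ is well-behaved. There are constants $c_m, d_m$ depending only on $m$ such that: (i) if $\mathcal{A}$ is a DFA, then $V_L(n) \leq (2^m \cdot m + 1)\cdot \log n + c_m$ for all sufficiently large $n$; (ii) if $\mathcal{A}$ is an NFA, then $V_L(n) \leq (4^m + 1)\cdot\log n + d_m$ for all sufficiently large $n$.
   Context: $\log x$ denotes $\lfloor \log_2 x\rfloor$. For an NFA $\mathcal{A}$, $\mathcal{A}^\mathsf{R}$ is the NFA obtained by reversing all transitions and swapping initial and final state sets, and $\mathcal{A}^{\mathsf{RD}}$ is the subset-construction DFA of $\mathcal{A}^\mathsf{R}$ restricted to states reachable from its initial state (so it accepts $L^\mathsf{R}$). A DFA $(Q,\Sigma,q_0,\delta,F)$ is well-behaved if every strongly connected component $C$ (inclusion-maximal set of mutually reachable states) reachable from $q_0$ satisfies: for all $q\in C$ and $u,v\in\Sigma^*$ with $|u|=|v|$ and $\delta(q,u),\delta(q,v)\in C$, $\delta(q,u)\in F \iff \delta(q,v)\in F$. Variable-size sliding window model: a streaming algorithm over $\overline\Sigma$ is a deterministic (possibly infinite-state) automaton with an injective encoding $\mathrm{enc}$ of states into bit strings, and $\mathrm{space}(\mathcal{A},w)=\max\{|\mathrm{enc}(\mathcal{A}(u))|: u\text{ prefix of }w\}$. Let $\overline\Sigma=\Sigma\cup\{\downarrow\}$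 and $\mathrm{wnd}\colon\overline\Sigma^*\to\Sigma^*$ given by $\mathrm{wnd}(\varepsilon)=\varepsilon$, $\mathrm{wnd}(ub)=\mathrm{wnd}(u)b$ ($b\in\Sigma$), $\mathrm{wnd}(u\!\downarrow)=\varepsilon$ if $\mathrm{wnd}(u)=\varepsilon$, $\mathrm{wnd}(u\!\downarrow)=v$ if $\mathrm{wnd}(u)=bv$. A variable-size sliding window algorithm for $L$ is a streaming algorithm over $\overline\Sigma$ accepting $\{w:\mathrm{wnd}(w)\in L\}$, with space complexity $v_\mathcal{A}(n)=\max\{\mathrm{space}(\mathcal{A},u): |\mathrm{wnd}(v)|\le n\text{ for all prefixes }v\text{ of }u\}$. $V_L(n)$ is the minimum of $v_\mathcal{A}(n)$ over all variable-size sliding window algorithms $\mathcal{A}$ for $L$. *)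

From mathcomp Require Import all_boot.
Set Implicit Arguments. Unset Strict Implicit. Unset Printing Implicit Defensive.

Record nfa (Sigma Q : finType) := NFA {
  n_init  : {set Q};
  n_trans : Q -> Sigma -> {set Q};
  n_final : {set Q} }.

Record dfa (Sigma Q : finType) := DFA {
  d_init  : Q;
  d_trans : Q -> Sigma -> Q;
  d_final : {set Q} }.

Definition n_step (Sigma Q : finType) (A : nfa Sigma Q) (S : {set Q}) (a : Sigma)
  : {set Q} := \bigcup_(q in S) n_trans A q a.
Definition n_star (Sigma Q : finType) (A : nfa Sigma Q) (S : {set Q}) (w : seq Sigma)
  : {set Q} := foldl (n_step A) S w.

Definition lang (Sigma Q : finType) (A : nfa Sigma Q) (w : seq Sigma) : Prop :=
  n_star A (n_init A) w :&: n_final A != set0.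

Definition d_star (Sigma Q : finType) (D : dfa Sigma Q) (q : Q) (w : seq Sigma) : Q :=
  foldl (d_trans D) q w.

Definition nfa_of_dfa (Sigma Q : finType) (D : dfa Sigma Q) : nfa Sigma Q :=
  NFA [set d_init D] (fun q a => [set d_trans D q a]) (d_final D).

Definition nfa_rev (Sigma Q : finType) (A : nfa Sigma Q) : nfa Sigma Q :=
  NFA (n_final A) (fun p a => [set q | p \in n_trans A q a]) (n_init A).

(* subset-construction DFA of an NFA (on all subsets; restriction to the
   states reachable from the initial one is irrelevant for well-behavedness) *)
Definition subset_dfa (Sigma Q : finType) (A : nfa Sigma Q) : dfa Sigma {set Q} :=
  DFA (n_init A) (n_step A) [set S : {set Q} | S :&: n_final A != set0].

Definition rev_det (Sigma Q : finType) (A : nfa Sigma Q) : dfa Sigma {set Q} :=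
  subset_dfa (nfa_rev A).

Definition d_reach (Sigma Q : finType) (D : dfa Sigma Q) (p q : Q) : Prop :=
  exists w, d_star D p w = q.

Definition mutually_reachable (Sigma Q : finType) (D : dfa Sigma Q) (C : {set Q}) : Prop :=
  forall p q, p \in C -> q \in C -> d_reach D p q.

Definition is_scc (Sigma Q : finType) (D : dfa Sigma Q) (C : {set Q}) : Prop :=
  mutually_reachable D C /\
  forall C' : {set Q}, C \subset C' -> mutually_reachable D C' -> C' = C.

Definition well_behaved (Sigma Q : finType) (D : dfa Sigma Q) : Prop :=
  forall C : {set Q}, is_scc D C ->
    (exists2 p, p \in C & d_reach D (d_init D) p) ->
    forall q (u v : seq Sigma), q \in C -> size u = size v ->
      d_star D q u \in C -> d_star D q v \in C ->
      (d_star D q u \in d_final D) = (d_star D q v \in d_final D).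

(* the extended alphabet Sigma-bar = Sigma + {down}; None stands for down *)
Definition wnd_step (Sigma : Type) (s : seq Sigma) (b : option Sigma) : seq Sigma :=
  match b with
  | Some a => rcons s a
  | None => behead s
  end.

Definition wnd (Sigma : Type) (w : seq (option Sigma)) : seq Sigma :=
  foldl (@wnd_step Sigma) [::] w.

Record streaming_alg (Sigma : Type) := StreamingAlg {
  sa_state : Type;
  sa_init  : sa_state;
  sa_trans : sa_state -> option Sigma -> sa_state;
  sa_final : sa_state -> Prop;
  sa_enc   : sa_state -> seq bool;
  sa_enc_inj : injective sa_enc }.
Arguments sa_init {Sigma} s.
Arguments sa_trans {Sigma} s _ _.
Arguments sa_final {Sigma} s _.
Arguments sa_enc {Sigma} s _.

Definition sa_run (Sigma : Type) (P : streaming_alg Sigma) (w : seq (option Sigma))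
  : sa_state P := foldl (sa_trans P) (sa_init P) w.

Definition space (Sigma : Type) (P : streaming_alg Sigma) (w : seq (option Sigma)) : nat :=
  \max_(i < (size w).+1) size (sa_enc P (sa_run P (take i w))).

Definition is_vsw_alg (Sigma : Type) (L : seq Sigma -> Prop) (P : streaming_alg Sigma)
  : Prop := forall w, sa_final P (sa_run P w) <-> L (wnd w).

Definition v_le (Sigma : Type) (P : streaming_alg Sigma) (n k : nat) : Prop :=
  forall u : seq (option Sigma),
    (forall i, i <= size u -> size (wnd (take i u)) <= n) -> space P u <= k.

(* V_L(n) <= k, where V_L(n) = min over all vsw algorithms P for L of v_P(n) *)
Definition V_le (Sigma : Type) (L : seq Sigma -> Prop) (n k : nat) : Prop :=
  exists P : streaming_alg Sigma, is_vsw_alg L P /\ v_le P n k.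

Definition log2 (x : nat) : nat := trunc_log 2 x.

From mathcomp Require Import all_boot zify.
Set Implicit Arguments. Unset Strict Implicit. Unset Printing Implicit Defensive.

(* B = A^RD reads the window backwards: w is in L iff B accepts rev w from its
   initial state.  Whatever is streamed next, the window becomes drop i w ++ y,
   so an algorithm only has to know, for every reachable state P of B and every
   i, whether B accepts rev (drop i w) = take (|w| - i) (rev w) from P, i.e. the
   acceptance bits along the run of B from P on rev w.  Such a run visits at
   most |B| strongly connected components, and by well-behavedness acceptance
   inside a component only depends on the state by which the component was
   entered and on the distance travelled since.  Hence |w| together with the
   (step, state) pairs where the runs from a family R of states enter new
   components determines the window up to equivalence; this costs
   (|B| |R| + 1) log n + O(1) bits.  For an NFA take R = all reachable states,
   |B| |R| <= 4^m.  For a DFA the bit from a state P of B (a set of states of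
   A) only says whether P contains the state reached by A, so a subfamily of at
   most m sets separating the same states of A suffices: |B| |R| <= 2^m m. *)

Section WindowShape.
Variable Sigma : Type.

Lemma wnd_foldl_drop_cat (l : nat) (x : seq (option Sigma)) :
  exists i (y : seq Sigma), forall w : seq Sigma, size w = l ->
    foldl (@wnd_step Sigma) w x = drop i w ++ y.
Proof.
elim/last_ind: x => [|x [a|] [i [y shape]]].
- by exists 0, [::] => w _; rewrite drop0 cats0.
- by exists i, (rcons y a) => w size_w; rewrite foldl_rcons shape //= rcons_cat.
- have [lt_il|le_li] := ltnP i l.
    exists i.+1, y => w size_w; rewrite foldl_rcons shape //= -add1n -drop_drop.
    have : 0 < size (drop i w) by rewrite size_drop size_w subn_gt0.
    by case: (drop i w) => //= c t _; rewrite drop0.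
  exists i, (behead y) => w size_w.
  by rewrite foldl_rcons shape //= drop_oversize ?size_w.
Qed.

End WindowShape.

Definition wnd_equiv (Sigma : Type) (L : seq Sigma -> Prop) (u v : seq Sigma) :=
  forall x, L (foldl (@wnd_step Sigma) u x) <-> L (foldl (@wnd_step Sigma) v x).

Section BinaryCode.
Variables (K : finType) (k : nat).
Hypothesis card_K : #|K| <= 2 ^ k.

Lemma card_bits : #|{: k.-tuple bool}| = 2 ^ k.
Proof. by rewrite card_tuple card_bool. Qed.

Definition bin_code (x : K) : seq bool :=
  val (enum_val (cast_ord (esym card_bits) (widen_ord card_K (enum_rank x)))).

Lemma size_bin_code x : size (bin_code x) = k.
Proof. exact: size_tuple. Qed.

Lemma bin_code_inj : injective bin_code.
Proof.
move=> x y /val_inj /enum_val_inj /cast_ord_inj /(congr1 val) /= /val_inj.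
exact: enum_rank_inj.
Qed.

End BinaryCode.

Section WindowClassAlgorithm.
Variables (Sigma : finType) (L : seq Sigma -> Prop) (n k : nat) (K : finType).
Variable key : seq Sigma -> K.
Hypothesis key_equiv : forall u v, size u <= n -> size v <= n -> key u = key v ->
  size u = size v /\ wnd_equiv L u v.
Hypothesis card_K : #|K| <= 2 ^ k.

Lemma wnd_equiv_trans u v w : wnd_equiv L u v -> wnd_equiv L v w -> wnd_equiv L u w.
Proof. by move=> uv vw x; exact: iff_trans (uv x) (vw x). Qed.

Lemma wnd_equiv_step u v b : wnd_equiv L u v -> wnd_equiv L (wnd_step u b) (wnd_step v b).
Proof. by move=> uv x; exact: uv (b :: x). Qed.

(* Windows longer than n are never reached within the space bound, so they
   may represent themselves. *)
Definition class_tag (w : seq Sigma) : K + seq Sigma :=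
  if size w <= n then inl (key w) else inr w.

Definition canon (w : seq Sigma) : seq Sigma :=
  xchoose (ex_intro (fun w' => class_tag w' == class_tag w) w (eqxx _)).

Lemma class_tag_canon w : class_tag (canon w) = class_tag w.
Proof. exact/eqP/(xchooseP (ex_intro (fun w' => class_tag w' == class_tag w) w (eqxx _))). Qed.

Lemma canon_eq u v : class_tag u = class_tag v -> canon u = canon v.
Proof. by move=> tag_uv; apply: eq_xchoose => w; rewrite tag_uv. Qed.

Lemma canon_idem w : canon (canon w) = canon w.
Proof. exact/canon_eq/class_tag_canon. Qed.

Lemma canon_equiv w : size (canon w) = size w /\ wnd_equiv L (canon w) w.
Proof.
have := class_tag_canon w; rewrite /class_tag.
case: ifP => short_c; case: ifP => short_w //.
  by case=> /(key_equiv short_c short_w).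
by case=> ->.
Qed.

Definition canon_enc (s : seq Sigma) : seq bool :=
  if (size s <= n) && (canon s == s) then false :: bin_code card_K (key s)
  else true :: nseq (pickle s) false.

Lemma canon_enc_inj : injective canon_enc.
Proof.
move=> s1 s2; rewrite /canon_enc.
case: ifP => /andP; case: ifP => /andP //.
- move=> [short2 /eqP canon2] [short1 /eqP canon1] [/bin_code_inj key12].
  by rewrite -canon1 -canon2; apply: canon_eq; rewrite /class_tag short1 short2 key12.
- by move=> _ _ [/(congr1 size)]; rewrite !size_nseq; exact: (pcan_inj pickleK).
Qed.

Definition window_class_alg : streaming_alg Sigma :=
  @StreamingAlg Sigma (seq Sigma) (canon [::]) (fun s b => canon (wnd_step s b))
    L canon_enc canon_enc_inj.

Lemma window_class_alg_run w : exists2 t, sa_run window_class_alg w = canon t &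
  size t = size (wnd w) /\ wnd_equiv L t (wnd w).
Proof.
elim/last_ind: w => [|w b [t run_w [size_t equiv_t]]]; first by exists [::].
rewrite /sa_run /wnd !foldl_rcons -/(sa_run _ w) -/(wnd w) run_w.
have [size_c equiv_c] := canon_equiv t.
exists (wnd_step (canon t) b) => //; split.
  by case: b => [a|] /=; rewrite ?size_rcons ?size_behead size_c size_t.
exact/wnd_equiv_step/(wnd_equiv_trans equiv_c).
Qed.

Lemma V_le_of_window_key : V_le L n k.+1.
Proof.
exists window_class_alg; split=> [w|u short_u].
  have [t -> [_ equiv_t]] := window_class_alg_run w.
  exact: (wnd_equiv_trans (canon_equiv t).2 equiv_t [::]).
apply/bigmax_leqP => i _.
have [t -> [size_t _]] := window_class_alg_run (take i u).
have short_t : size t <= n by rewrite size_t short_u // -ltnS.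
by rewrite /= /canon_enc canon_idem eqxx (canon_equiv t).1 short_t /= size_bin_code.
Qed.

End WindowClassAlgorithm.

Section NfaRuns.
Variables (Sigma Q : finType) (A : nfa Sigma Q).

Lemma n_star_cons S a x : n_star A S (a :: x) = n_star A (n_step A S a) x.
Proof. by []. Qed.

Lemma n_star_rcons S x a : n_star A S (rcons x a) = n_step A (n_star A S x) a.
Proof. exact: foldl_rcons. Qed.

Lemma n_step_set1 p a : n_step A [set p] a = n_trans A p a.
Proof. exact: big_set1. Qed.

Lemma mem_n_star S x q :
  (q \in n_star A S x) = [exists p in S, q \in n_star A [set p] x].
Proof.
elim: x S => [|a x IH] S.
  apply/idP/existsP => [qS|[p /andP [pS]]]; first by exists q; rewrite qS /n_star /= inE.
  by rewrite /n_star /= inE => /eqP ->.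
rewrite n_star_cons IH; apply/existsP/existsP => [[r /andP [/bigcupP [p pS rp] qr]]|].
  by exists p; rewrite pS n_star_cons n_step_set1 IH; apply/existsP; exists r; rewrite rp.
move=> [p /andP [pS]]; rewrite n_star_cons n_step_set1 IH => /existsP [r /andP [rp qr]].
by exists r; rewrite qr andbT; apply/bigcupP; exists p.
Qed.

End NfaRuns.

Section NfaReversal.
Variables (Sigma Q : finType) (A : nfa Sigma Q).

Lemma mem_n_star_rev p q x :
  (p \in n_star (nfa_rev A) [set q] (rev x)) = (q \in n_star A [set p] x).
Proof.
elim: x p => [|a x IH] p; first by rewrite !inE eq_sym.
rewrite rev_cons n_star_rcons n_star_cons n_step_set1 mem_n_star.
apply/bigcupP/existsP => [[r qr]|[r /andP [rp qr]]].
  by rewrite inE => pr; exists r; rewrite pr -IH.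
by exists r; rewrite ?inE ?IH.
Qed.

Lemma d_star_rev_det P w : d_star (rev_det A) P w = n_star (nfa_rev A) P w.
Proof. by []. Qed.

Definition accepts_from (P : {set Q}) (u : seq Sigma) : bool :=
  d_star (rev_det A) P (rev u) \in d_final (rev_det A).

Lemma accepts_fromE P u :
  accepts_from P u = [exists p in n_init A, exists q in P, q \in n_star A [set p] u].
Proof.
rewrite /accepts_from d_star_rev_det inE.
apply/set0Pn/existsP => [[p /setIP [pP pI]]|[p /andP [pI]]].
  exists p; rewrite pI; move: pP; rewrite mem_n_star.
  by under eq_existsb do rewrite mem_n_star_rev.
move=> /existsP [q /andP [qP pq]]; exists p; rewrite inE pI andbT mem_n_star.
by apply/existsP; exists q; rewrite qP mem_n_star_rev.
Qed.

Lemma lang_accepts_from x : lang A x <-> accepts_from (n_final A) x.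
Proof.
rewrite /lang accepts_fromE; split.
  move=> /set0Pn [q /setIP []]; rewrite mem_n_star => /existsP [p /andP [pI qp] qF].
  by apply/existsP; exists p; rewrite pI; apply/existsP; exists q; rewrite qF.
move=> /existsP [p /andP [pI /existsP [q /andP [qF qp]]]].
by apply/set0Pn; exists q; rewrite inE qF andbT mem_n_star; apply/existsP; exists p; rewrite pI.
Qed.

Lemma lang_cat_accepts_from x y :
  lang A (x ++ y) <-> accepts_from (d_star (rev_det A) (n_final A) (rev y)) x.
Proof.
apply: iff_trans (lang_accepts_from _) _.
by rewrite /accepts_from rev_cat /d_star foldl_cat.
Qed.

End NfaReversal.

Lemma n_star_nfa_of_dfa (Sigma Q : finType) (D : dfa Sigma Q) q u :
  n_star (nfa_of_dfa D) [set q] u = [set d_star D q u].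
Proof. by elim: u q => [|a u IH] q //; rewrite n_star_cons n_step_set1 -IH. Qed.

Lemma accepts_from_nfa_of_dfa (Sigma Q : finType) (D : dfa Sigma Q) S u :
  accepts_from (nfa_of_dfa D) S u = (d_star D (d_init D) u \in S).
Proof.
rewrite accepts_fromE; apply/existsP/idP => [[p]|uS].
  rewrite inE => /andP [/eqP -> /existsP [q]].
  by rewrite n_star_nfa_of_dfa inE => /andP [qS /eqP <-].
exists (d_init D); rewrite /= inE eqxx; apply/existsP; exists (d_star D (d_init D) u).
by rewrite uS n_star_nfa_of_dfa inE eqxx.
Qed.

Section StronglyConnectedComponents.
Variables (Sigma T : finType) (D : dfa Sigma T).

Definition d_edge : rel T := fun p q => [exists a, d_trans D p a == q].

Lemma d_star_cat p u v : d_star D p (u ++ v) = d_star D (d_star D p u) v.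
Proof. exact: foldl_cat. Qed.

Lemma d_reachP p q : reflect (d_reach D p q) (connect d_edge p q).
Proof.
apply: (iffP idP) => [/connectP [s]|[w <-]].
  elim: s p => [|r s IH] p /=; first by move=> _ ->; exists [::].
  by case/andP=> /existsP [a /eqP <-] /IH IHs /IHs [w <-]; exists (a :: w).
elim: w p => [|a w IH] p; first exact: connect0.
apply: connect_trans (IH _); apply: connect1; apply/existsP; by exists a.
Qed.

Definition scc (p : T) : {set T} := [set q | connect d_edge p q && connect d_edge q p].

Lemma scc_refl p : p \in scc p.
Proof. by rewrite inE connect0. Qed.

Lemma scc_eq p q : q \in scc p -> scc q = scc p.
Proof.
rewrite inE => /andP [pq qp]; apply/setP => r; rewrite !inE.
apply/andP/andP => [[qr rq] | [pr rp]]; split.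
- exact: connect_trans qr.
- exact: connect_trans rq qp.
- exact: connect_trans pr.
- exact: connect_trans rp pq.
Qed.

Lemma scc_is_scc p : is_scc D (scc p).
Proof.
split=> [q r|C sub_C mutual_C].
  rewrite !inE => /andP [_ qp] /andP [pr _]; exact/d_reachP/(connect_trans qp).
have pC : p \in C by apply: (subsetP sub_C); exact: scc_refl.
apply/eqP; rewrite eqEsubset sub_C andbT; apply/subsetP => q qC.
by rewrite inE; apply/andP; split; apply/d_reachP; apply: mutual_C.
Qed.

Variable P : T.

Definition run_at (v : seq Sigma) (j : nat) : T := d_star D P (take j v).

Lemma run_at0 v : run_at v 0 = P.
Proof. by rewrite /run_at take0. Qed.

Lemma run_at_addn v i d : run_at v (i + d) = d_star D (run_at v i) (take d (drop i v)).
Proof. by rewrite /run_at takeD d_star_cat. Qed.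

Lemma connect_run_at v i j : i <= j -> connect d_edge (run_at v i) (run_at v j).
Proof. by move=> le_ij; rewrite -(subnKC le_ij) run_at_addn; apply/d_reachP; eexists. Qed.

Definition scc_entry (v : seq Sigma) (j : nat) : option T :=
  if scc (run_at v j.+1) != scc (run_at v j) then Some (run_at v j.+1) else None.

Lemma scc_entry_size v j : size v <= j -> scc_entry v j = None.
Proof. by move=> le_vj; rewrite /scc_entry /run_at !take_oversize ?eqxx // leqW. Qed.

Lemma scc_entry_uniq v i j q :
  scc_entry v i = Some q -> scc_entry v j = Some q -> i = j.
Proof.
have ltn_entry i' j' : i' < j' -> scc_entry v i' = Some q -> scc_entry v j' = Some q -> False.
  move=> lt_ij; rewrite /scc_entry; case: ifP => // _ [entry_i].
  case: ifPn => // /eqP new_scc [entry_j]; apply: new_scc; apply: scc_eq.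
  by rewrite inE connect_run_at //= entry_j -entry_i connect_run_at.
by move=> ei ej; case: (ltngtP i j) => // lt; [case: (ltn_entry i j) | case: (ltn_entry j i)].
Qed.

(* A run never returns to a component it has left, so each state is an entry
   state at most once and the entries form a partial map from states to steps. *)
Definition scc_entries (n : nat) (v : seq Sigma) : {ffun T -> option 'I_n} :=
  [ffun q => [pick j : 'I_n | scc_entry v j == Some q]].

Lemma scc_entriesP n v q (j : 'I_n) :
  (scc_entries n v q == Some j) = (scc_entry v j == Some q).
Proof.
rewrite ffunE; case: pickP => [i /eqP entry_i | none]; last by rewrite none.
apply/eqP/eqP => [[<-] // | entry_j].
by congr Some; apply/val_inj/(scc_entry_uniq entry_i entry_j).
Qed.

Lemma scc_entries_inj n v1 v2 : size v1 <= n -> size v2 <= n ->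
  scc_entries n v1 = scc_entries n v2 -> scc_entry v1 =1 scc_entry v2.
Proof.
move=> short1 short2 entries12 j.
have [lt_jn|le_nj] := ltnP j n; last first.
  by rewrite !scc_entry_size // (leq_trans _ le_nj).
have transfer v v' q : scc_entries n v = scc_entries n v' ->
    scc_entry v j = Some q -> scc_entry v' j = Some q.
  move=> entries /eqP; have /= <- := scc_entriesP v q (Ordinal lt_jn).
  by rewrite entries scc_entriesP => /eqP.
case entry1: (scc_entry v1 j) => [q|]; first by rewrite (transfer _ _ _ entries12 entry1).
case entry2: (scc_entry v2 j) => [q|] //.
by rewrite (transfer _ _ _ (esym entries12) entry2) in entry1.
Qed.

(* The last common entry state before step j anchors both runs in one component. *)
Lemma scc_entry_anchor v1 v2 : scc_entry v1 =1 scc_entry v2 ->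
  forall j, exists2 e, e <= j & [/\ run_at v1 e = run_at v2 e,
    run_at v1 j \in scc (run_at v1 e) & run_at v2 j \in scc (run_at v1 e)].
Proof.
move=> entries12; elim=> [|j [e le_ej [run_e in1 in2]]].
  by exists 0 => //; rewrite !run_at0 scc_refl.
have := entries12 j; rewrite /scc_entry.
case: ifPn => [_|/negPn/eqP stay1]; case: ifPn => [_|/negPn/eqP stay2] //.
  by case=> run_j; exists j.+1 => //; rewrite run_j scc_refl.
move=> _; exists e; first exact: leqW.
split=> //; first by rewrite -(scc_eq in1) -stay1 scc_refl.
by rewrite -(scc_eq in2) -stay2 scc_refl.
Qed.

Lemma well_behaved_run_final v1 v2 :
  well_behaved D -> connect d_edge (d_init D) P ->
  size v1 = size v2 -> scc_entry v1 =1 scc_entry v2 ->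
  forall j, j <= size v1 -> (run_at v1 j \in d_final D) = (run_at v2 j \in d_final D).
Proof.
move=> wb reach_P size12 entries12 j le_j.
have [e le_ej [run_e in1 in2]] := scc_entry_anchor entries12 j.
have run_j v : run_at v j = d_star D (run_at v e) (take (j - e) (drop e v)).
  by rewrite -run_at_addn subnKC.
have size_rest v : j <= size v -> size (take (j - e) (drop e v)) = j - e.
  by move=> le_jv; rewrite size_takel // size_drop leq_sub2r.
rewrite run_j in in1; rewrite run_j -run_e in in2.
rewrite !run_j -run_e; apply: (wb _ (scc_is_scc (run_at v1 e))) => //.
- exists (run_at v1 e); first exact: scc_refl.
  by apply/d_reachP/(connect_trans reach_P); rewrite -(run_at0 v1) connect_run_at.
- exact: scc_refl.
- by rewrite !size_rest // -size12.
Qed.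

End StronglyConnectedComponents.

Section SeparatingSubfamily.
Variable Q : finType.

Definition signature (s : seq {set Q}) (q : Q) : seq bool := [seq q \in P | P : {set Q} <- s].

Definition agree_class (s : seq {set Q}) (q : Q) : {set Q} :=
  [set q' | signature s q' == signature s q].

Definition agree_classes (s : seq {set Q}) : {set {set Q}} := [set agree_class s q | q : Q].

Lemma agree_class_eq s q q' :
  (agree_class s q == agree_class s q') = (signature s q == signature s q').
Proof.
apply/eqP/eqP => [/setP /(_ q')|sig_qq']; first by rewrite !inE eqxx => /eqP.
by apply/setP => r; rewrite !inE sig_qq'.
Qed.

Lemma card_agree_classes s : #|agree_classes s| <= #|Q|.
Proof. exact: leq_imset_card. Qed.

Lemma card_agree_classes_cons s (P : {set Q}) q q' :
  signature s q = signature s q' -> (q \in P) != (q' \in P) ->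
  #|agree_classes s| < #|agree_classes (P :: s)|.
Proof.
move=> sig_qq' sep_P.
pose merge (N : {set Q}) := \bigcup_(r in N) agree_class s r.
have merge_class r : merge (agree_class (P :: s) r) = agree_class s r.
  apply/setP => z; apply/bigcupP/idP => [[y]|zr]; last by exists r => //; rewrite inE.
  by rewrite !inE => /eqP [_ ->] /eqP ->.
have -> : agree_classes s = merge @: agree_classes (P :: s).
  by rewrite -imset_comp; apply: eq_imset => r; rewrite /= merge_class.
rewrite ltn_neqAle leq_imset_card andbT; apply/negP => /imset_injP merge_inj.
have class_in r : agree_class (P :: s) r \in agree_classes (P :: s) by apply: imset_f.
have merge_qq' : merge (agree_class (P :: s) q) = merge (agree_class (P :: s) q').
  by rewrite !merge_class; apply/eqP; rewrite agree_class_eq sig_qq'.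
move/eqP: (merge_inj _ _ (class_in q) (class_in q') merge_qq').
by rewrite agree_class_eq => /eqP [P_qq' _]; rewrite P_qq' eqxx in sep_P.
Qed.

Lemma exists_separating_subseq (s : seq {set Q}) :
  exists2 R : seq {set Q}, {subset R <= s} &
    size R <= #|Q| /\ forall q q', signature R q = signature R q' -> signature s q = signature s q'.
Proof.
suff [R sub_R [size_R sep_R]] : exists2 R : seq {set Q}, {subset R <= s} &
    size R <= #|agree_classes R| - 1 /\
    forall q q', signature R q = signature R q' -> signature s q = signature s q'.
  exists R => //; split=> //; apply: leq_trans size_R _.
  by apply: leq_trans (leq_subr _ _) (card_agree_classes R).
elim: s => [|P s [R sub_R [size_R sep_R]]]; first by exists [::].
have [/existsP [q /existsP [q' /andP [/eqP sig_qq' sep_P]]] | no_split] :=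
  boolP [exists q, exists q', (signature R q == signature R q') && ((q \in P) != (q' \in P))].
  exists (P :: R).
    by move=> x; rewrite !inE => /predU1P [->|/sub_R ->]; rewrite ?eqxx ?orbT.
  split; last by move=> r r' [sep_rr' /sep_R sig_rr']; congr (_ :: _).
  have := card_agree_classes_cons sig_qq' sep_P.
  have : 0 < #|agree_classes R| by apply/card_gt0P; exists (agree_class R q); exact: imset_f.
  by move: size_R => /=; lia.
exists R; first by move=> x /sub_R; rewrite inE orbC => ->.
split=> // q q' sig_qq'; congr (_ :: _); last exact: sep_R.
apply/eqP/negPn/negP => sep_P; case/negP: no_split.
by apply/existsP; exists q; apply/existsP; exists q'; rewrite sig_qq' eqxx.
Qed.

End SeparatingSubfamily.

Section RevDetKey.
Variables (Sigma Q : finType) (A : nfa Sigma Q).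
Hypothesis wb : well_behaved (rev_det A).
Variable R : seq {set Q}.
Hypothesis R_reachable :
  {in R, forall P, connect (d_edge (rev_det A)) (d_init (rev_det A)) P}.
Hypothesis R_determines : forall u v,
  {in R, forall P, accepts_from A P u = accepts_from A P v} ->
  forall P, connect (d_edge (rev_det A)) (d_init (rev_det A)) P ->
    accepts_from A P u = accepts_from A P v.

Definition window_key (n : nat) (w : seq Sigma) :
    'I_n.+1 * (size R).-tuple {ffun {set Q} -> option 'I_n} :=
  (inord (size w), map_tuple (fun P => scc_entries (rev_det A) P n (rev w)) (in_tuple R)).

Lemma accepts_from_drop P u i :
  accepts_from A P (drop i u) = (run_at (rev_det A) P (rev u) (size u - i) \in d_final (rev_det A)).
Proof. by rewrite /accepts_from rev_drop. Qed.

Lemma window_key_equiv n u v : size u <= n -> size v <= n ->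
  window_key n u = window_key n v -> size u = size v /\ wnd_equiv (lang A) u v.
Proof.
move=> short_u short_v [/(congr1 val)]; rewrite /= !inordK // => size_uv.
move=> /eq_in_map entries_uv; split=> // x.
have accepts_drop i : {in R, forall P, accepts_from A P (drop i u) = accepts_from A P (drop i v)}.
  move=> P P_R; rewrite !accepts_from_drop size_uv.
  apply: well_behaved_run_final; rewrite ?size_rev ?size_uv ?leq_subr ?R_reachable //.
  by apply: scc_entries_inj (entries_uv P P_R); rewrite size_rev.
have [i [y shape]] := wnd_foldl_drop_cat (size u) x.
rewrite (shape u) // (shape v) //.
apply: iff_trans (lang_cat_accepts_from _ _ _) _.
apply: iff_trans _ (iff_sym (lang_cat_accepts_from _ _ _)).
by rewrite (R_determines (accepts_drop i)) //; apply/d_reachP; exists (rev y).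
Qed.

Lemma V_le_rev_det n K : #|{: {set Q}}| * size R <= K ->
  V_le (lang A) n ((K + 1) * log2 n + (K + 2)).
Proof.
move=> le_K.
have -> : (K + 1) * log2 n + (K + 2) = ((log2 n).+1 * (K + 1)).+1 by lia.
apply: (V_le_of_window_key (key := window_key n)); first exact: window_key_equiv.
rewrite card_prod card_ord card_tuple card_ffun card_option card_ord -expnM -expnS expnM.
apply: (@leq_trans (n.+1 ^ (K + 1))); first by rewrite leq_pexp2l // addn1 ltnS.
by rewrite leq_exp2r ?addn1 // trunc_log_ltn.
Qed.

End RevDetKey.

Lemma card_set_type (T : finType) : #|{: {set T}}| = 2 ^ #|T|.
Proof. by rewrite -[LHS]cardsT -powersetT card_powerset cardsT. Qed.

Section Bounds.
Variables (Sigma Q : finType).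

Lemma V_le_nfa (A : nfa Sigma Q) : well_behaved (rev_det A) -> forall n,
  V_le (lang A) n ((4 ^ #|Q| + 1) * log2 n + (4 ^ #|Q| + 2)).
Proof.
move=> wb n.
pose R := enum [set P | connect (d_edge (rev_det A)) (d_init (rev_det A)) P].
apply: (V_le_rev_det wb (R := R)) => [P|u v accepts_R P reach_P|].
- by rewrite mem_enum inE.
- by apply: accepts_R; rewrite mem_enum inE.
- rewrite card_set_type -[4]/(2 * 2) expnMn leq_mul // -cardE.
  by rewrite -card_set_type max_card.
Qed.

Lemma V_le_dfa (A : dfa Sigma Q) : well_behaved (rev_det (nfa_of_dfa A)) -> forall n,
  V_le (lang (nfa_of_dfa A)) n ((2 ^ #|Q| * #|Q| + 1) * log2 n + (2 ^ #|Q| * #|Q| + 2)).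
Proof.
move=> wb n; set B := rev_det (nfa_of_dfa A).
have [R sub_R [size_R sep_R]] :=
  exists_separating_subseq (enum [set P | connect (d_edge B) (d_init B) P]).
apply: (V_le_rev_det wb (R := R)) => [P /sub_R|u v accepts_R P reach_P|].
- by rewrite mem_enum inE.
- rewrite !accepts_from_nfa_of_dfa.
  have : signature R (d_star A (d_init A) u) = signature R (d_star A (d_init A) v).
    by apply/eq_in_map => S S_R; rewrite /= -!accepts_from_nfa_of_dfa accepts_R.
  by move/sep_R/eq_in_map; apply; rewrite mem_enum inE.
- by rewrite card_set_type leq_mul.
Qed.

End Bounds.

Theorem theorem5p2 :
  forall m : nat, exists c_m d_m : nat,
    (forall (Sigma : finType) (A : dfa Sigma 'I_m),
        well_behaved (rev_det (nfa_of_dfa A)) ->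
        exists n0, forall n, n0 <= n ->
          V_le (lang (nfa_of_dfa A)) n ((2 ^ m * m + 1) * log2 n + c_m))
    /\
    (forall (Sigma : finType) (A : nfa Sigma 'I_m),
        well_behaved (rev_det A) ->
        exists n0, forall n, n0 <= n ->
          V_le (lang A) n ((4 ^ m + 1) * log2 n + d_m)).
Proof.
move=> m; exists (2 ^ m * m + 2), (4 ^ m + 2); split=> Sigma A wb; exists 0 => n _.
- by have := V_le_dfa wb n; rewrite card_ord.
- by have := V_le_nfa wb n; rewrite card_ord.
Qed.
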